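(* Let $a>0$. The map $\Lambda_a$ maps $\mathcal D[0,\infty)$ into $\mathcal D[0,\infty)$, $\mathcal C[0,\infty)$ into $\mathcal C[0,\infty)$, $\mathcal{BV}[0,\infty)$ into $\mathcal{BV}[0,\infty)$, and absolutely continuous functions (on every compact interval) to absolutely continuous functions.
   Context: $\mathcal D[0,\infty)$ is the space of right-continuous functions $[0,\infty)\to\mathbb R$ with left limits; $\mathcal C[0,\infty)$ and $\mathcal{BV}[0,\infty)$ are its subsets of continuous functions and of functions of bounded variation on every compact interval. Notation: $x^+=\max(x,0)$, $x\wedge y=\min(x,y)$. For $a>0$ and a function $\phi:[0,\infty)\to\mathbb R$, $\Lambda_a(\phi)(t)=\phi(t)-\sup_{s\in[0,t]}\big[(\phi(s)-a)^+\wedge\inf_{u\in[s,t]}\phi(u)\big]$. *)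

From Stdlib Require Import Reals Lra ClassicalEpsilon.
Open Scope R_scope.

(* Supremum of a set of reals: the least upper bound if it exists
   (chosen by classical epsilon); an arbitrary value otherwise. *)
Definition sup_set (E : R -> Prop) : R :=
  epsilon (inhabits 0) (fun l => is_lub E l).

Definition inf_set (E : R -> Prop) : R :=
  - sup_set (fun x => E (- x)).

Definition Lambda (a : R) (phi : R -> R) (t : R) : R :=
  phi t - sup_set (fun y => exists s, 0 <= s <= t /\
     y = Rmin (Rmax (phi s - a) 0) (inf_set (fun z => exists u, s <= u <= t /\ z = phi u))).

Definition cadlag (f : R -> R) : Prop :=
  (forall t, 0 <= t -> forall eps, eps > 0 -> exists delta, delta > 0 /\
      forall s, t <= s < t + delta -> Rabs (f s - f t) < eps) /\
  (forall t, 0 < t -> exists l, forall eps, eps > 0 -> exists delta, delta > 0 /\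
      forall s, t - delta < s < t -> Rabs (f s - l) < eps).

Definition cont0 (f : R -> R) : Prop :=
  forall t, 0 <= t -> forall eps, eps > 0 -> exists delta, delta > 0 /\
    forall s, 0 <= s -> Rabs (s - t) < delta -> Rabs (f s - f t) < eps.

Fixpoint var_sum (f : R -> R) (x : nat -> R) (n : nat) : R :=
  match n with
  | O => 0
  | S k => var_sum f x k + Rabs (f (x (S k)) - f (x k))
  end.

Definition bv_loc (f : R -> R) : Prop :=
  forall T, 0 <= T -> exists M, forall (x : nat -> R) (n : nat),
    0 <= x O -> (forall i, (i < n)%nat -> x i <= x (S i)) -> x n <= T ->
    var_sum f x n <= M.

Definition BV0 (f : R -> R) : Prop := cadlag f /\ bv_loc f.

Fixpoint fsum (g : nat -> R) (n : nat) : R :=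
  match n with
  | O => 0
  | S k => fsum g k + g k
  end.

Definition ac_loc (f : R -> R) : Prop :=
  forall T, 0 <= T -> forall eps, eps > 0 -> exists delta, delta > 0 /\
    forall (a b : nat -> R) (n : nat),
      (forall i, (i < n)%nat -> 0 <= a i /\ a i <= b i /\ b i <= T) ->
      (forall i, (S i < n)%nat -> b i <= a (S i)) ->
      fsum (fun i => b i - a i) n < delta ->
      fsum (fun i => Rabs (f (b i) - f (a i))) n < eps.

(* Write Lambda_a phi = phi - Xi_a phi, where
     Xi_a phi (t) = sup_{s in [0,t]} min((phi(s) - a)^+, inf_{[s,t]} phi).
   The one analytic fact is an oscillation bound (Xi_oscillation): if phi is
   bounded on [0,T], t <= t' <= T and |phi(u) - phi(t)| <= d on [t,t'], then
   |Xi(t') - Xi(t)| <= d.  Hence increments of Lambda over [t,t'] are bounded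
   by those of phi plus the oscillation of phi there (Lambda_increment).
   Since cadlag paths are bounded on compacts (cadlag_bounded), this transfers
   right-continuity, continuity and, through a Cauchy criterion, left limits.
   For variation and absolute continuity, each increment of Xi over [l,h] is
   approximated by an increment |phi(u) - phi(l)| with u in [l,h]
   (Xi_increment_witness); interleaving these points into a partition bounds
   the variation of Lambda by twice that of phi, and the intervals [l,u] are
   admissible families for the absolute continuity of phi.
   None of the arguments uses a > 0; the lemmas hold for every real a. *)

From Stdlib Require Import Reals Lra Lia ClassicalEpsilon.
Open Scope R_scope.

Lemma sup_set_lub (E : R -> Prop) :
  (exists x, E x) -> (exists M, forall x, E x -> x <= M) -> is_lub E (sup_set E).
Proof.
  intros Hne [M HM].
  destruct (completeness E (ex_intro _ M HM) Hne) as [m Hm].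
  unfold sup_set. apply epsilon_spec. exists m; exact Hm.
Qed.

Lemma sup_set_ub (E : R -> Prop) x M :
  (forall y, E y -> y <= M) -> E x -> x <= sup_set E.
Proof.
  intros HM Hx.
  destruct (sup_set_lub E (ex_intro _ x Hx) (ex_intro _ M HM)) as [Hub _].
  exact (Hub x Hx).
Qed.

Lemma sup_set_least (E : R -> Prop) b :
  (exists x, E x) -> (forall y, E y -> y <= b) -> sup_set E <= b.
Proof.
  intros Hne Hb.
  destruct (sup_set_lub E Hne (ex_intro _ b Hb)) as [_ Hleast].
  exact (Hleast b Hb).
Qed.

Lemma inf_set_lb (E : R -> Prop) x m :
  (forall y, E y -> m <= y) -> E x -> inf_set E <= x.
Proof.
  intros Hm Hx. unfold inf_set.
  enough (- x <= sup_set (fun z => E (- z))) by lra.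
  apply (sup_set_ub _ _ (- m)).
  - intros y Hy. specialize (Hm _ Hy). lra.
  - rewrite Ropp_involutive; exact Hx.
Qed.

Lemma inf_set_greatest (E : R -> Prop) b :
  (exists x, E x) -> (forall y, E y -> b <= y) -> b <= inf_set E.
Proof.
  intros [x Hx] Hb. unfold inf_set.
  enough (sup_set (fun z => E (- z)) <= - b) by lra.
  apply sup_set_least.
  - exists (- x). rewrite Ropp_involutive; exact Hx.
  - intros y Hy. specialize (Hb _ Hy). lra.
Qed.

Lemma lub_approx (E : R -> Prop) c d :
  is_lub E c -> d > 0 -> exists x, E x /\ c - d < x.
Proof.
  intros [_ Hleast] Hd. apply NNPP; intro Hnone.
  enough (c <= c - d) by lra.
  apply Hleast. intros x Hx. apply Rnot_lt_le. intro Hlt. apply Hnone. now exists x.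
Qed.

Definition bounded_on (phi : R -> R) (T M : R) : Prop :=
  forall u, 0 <= u <= T -> Rabs (phi u) <= M.

Definition run_inf (phi : R -> R) (s t : R) : R :=
  inf_set (fun z => exists u, s <= u <= t /\ z = phi u).

Definition xi_candidate (a : R) (phi : R -> R) (t s : R) : R :=
  Rmin (Rmax (phi s - a) 0) (run_inf phi s t).

Definition Xi (a : R) (phi : R -> R) (t : R) : R :=
  sup_set (fun y => exists s, 0 <= s <= t /\ y = xi_candidate a phi t s).

Lemma Lambda_eq a phi t : Lambda a phi t = phi t - Xi a phi t.
Proof. reflexivity. Qed.

Lemma run_inf_le phi T M s t u :
  bounded_on phi T M -> 0 <= s -> t <= T -> s <= u <= t -> run_inf phi s t <= phi u.
Proof.
  intros HB Hs Ht Hu. apply (inf_set_lb _ _ (- M)).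
  - intros y [v [Hv ->]]. specialize (HB v ltac:(lra)).
    pose proof (Rle_abs (- phi v)). rewrite Rabs_Ropp in *. lra.
  - now exists u.
Qed.

Lemma run_inf_ge phi s t b :
  s <= t -> (forall u, s <= u <= t -> b <= phi u) -> b <= run_inf phi s t.
Proof.
  intros Hst Hb. apply inf_set_greatest.
  - exists (phi s), s; split; [lra|reflexivity].
  - intros y [v [Hv ->]]. apply Hb; lra.
Qed.

Lemma run_inf_point phi T M t :
  bounded_on phi T M -> 0 <= t <= T -> run_inf phi t t = phi t.
Proof.
  intros HB Ht. apply Rle_antisym.
  - apply (run_inf_le phi T M); auto; lra.
  - apply run_inf_ge; [lra|]. intros u Hu. replace u with t by lra. lra.
Qed.

(* Candidates are bounded by the bound of phi, so Xi is a genuine supremum. *)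
Lemma xi_candidate_le_bound a phi T M t s :
  bounded_on phi T M -> 0 <= s <= t -> t <= T -> xi_candidate a phi t s <= M.
Proof.
  intros HB Hs Ht. unfold xi_candidate.
  pose proof (run_inf_le phi T M s t s HB ltac:(lra) Ht ltac:(lra)).
  pose proof (Rmin_r (Rmax (phi s - a) 0) (run_inf phi s t)).
  pose proof (HB s ltac:(lra)). pose proof (Rle_abs (phi s)). lra.
Qed.

Lemma Xi_ge_candidate a phi T M t s :
  bounded_on phi T M -> 0 <= s <= t -> t <= T -> xi_candidate a phi t s <= Xi a phi t.
Proof.
  intros HB Hs Ht. apply (sup_set_ub _ _ M).
  - intros y [s' [Hs' ->]]. apply (xi_candidate_le_bound a phi T M); auto.
  - now exists s.
Qed.

Lemma Xi_le a phi t b :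
  0 <= t -> (forall s, 0 <= s <= t -> xi_candidate a phi t s <= b) -> Xi a phi t <= b.
Proof.
  intros Ht Hb. apply sup_set_least.
  - exists (xi_candidate a phi t 0), 0; split; [lra|reflexivity].
  - intros y [s [Hs ->]]. apply Hb; lra.
Qed.

Lemma Rmin_le_shift A B A' B' d :
  A <= A' + d -> B <= B' + d -> Rmin A B <= Rmin A' B' + d.
Proof. intros. unfold Rmin; repeat destruct Rle_dec; lra. Qed.

Lemma Rmax0_le_shift A A' d : 0 <= d -> A <= A' + d -> Rmax A 0 <= Rmax A' 0 + d.
Proof. intros. unfold Rmax; repeat destruct Rle_dec; lra. Qed.

Section Oscillation.
Variables (a : R) (phi : R -> R) (T M t t' d : R).
Hypothesis bounded : bounded_on phi T M.
Hypothesis t_range : 0 <= t <= t'.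
Hypothesis t'_le_T : t' <= T.
Hypothesis osc : forall u, t <= u <= t' -> Rabs (phi u - phi t) <= d.

Lemma osc_nonneg : 0 <= d.
Proof. pose proof (osc t ltac:(lra)). rewrite Rminus_diag, Rabs_R0 in *. lra. Qed.

(* A candidate for t' is either dominated by the same candidate for t
   (s <= t: the infimum only decreases), or is within d of the candidate s = t. *)
Lemma Xi_increase_bound : Xi a phi t' <= Xi a phi t + d.
Proof.
  pose proof osc_nonneg.
  apply Xi_le; [lra|]. intros s Hs. unfold xi_candidate.
  destruct (Rle_dec s t) as [Hst|Hst].
  - assert (run_inf phi s t' <= run_inf phi s t).
    { apply run_inf_ge; [lra|]. intros u Hu. apply (run_inf_le phi T M); auto; lra. }
    pose proof (Xi_ge_candidate a phi T M t s bounded ltac:(lra) ltac:(lra)).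
    unfold xi_candidate in *.
    pose proof (Rmin_le_shift (Rmax (phi s - a) 0) (run_inf phi s t')
                  (Rmax (phi s - a) 0) (run_inf phi s t) 0 ltac:(lra) ltac:(lra)).
    lra.
  - pose proof (Xi_ge_candidate a phi T M t t bounded ltac:(lra) ltac:(lra)).
    unfold xi_candidate in *. rewrite (run_inf_point phi T M t) in * by (auto; lra).
    pose proof (run_inf_le phi T M s t' t' bounded ltac:(lra) ltac:(lra) ltac:(lra)).
    pose proof (osc s ltac:(lra)). pose proof (osc t' ltac:(lra)).
    enough (Rmin (Rmax (phi s - a) 0) (run_inf phi s t')
              <= Rmin (Rmax (phi t - a) 0) (phi t) + d) by lra.
    apply Rmin_le_shift; [apply Rmax0_le_shift|]; auto; split_Rabs; lra.
Qed.

(* Extending [s,t] to [s,t'] lowers the running infimum by at most d. *)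
Lemma Xi_decrease_bound : Xi a phi t <= Xi a phi t' + d.
Proof.
  pose proof osc_nonneg.
  apply Xi_le; [lra|]. intros s Hs.
  pose proof (Xi_ge_candidate a phi T M t' s bounded ltac:(lra) ltac:(lra)).
  assert (run_inf phi s t - d <= run_inf phi s t').
  { apply run_inf_ge; [lra|]. intros u Hu.
    pose proof (run_inf_le phi T M s t (Rmin u t) bounded ltac:(lra) ltac:(lra)
                  ltac:(unfold Rmin; destruct Rle_dec; lra)).
    unfold Rmin in *. destruct Rle_dec; [lra|].
    pose proof (osc u ltac:(lra)). split_Rabs; lra. }
  unfold xi_candidate in *.
  pose proof (Rmin_le_shift (Rmax (phi s - a) 0) (run_inf phi s t)
                (Rmax (phi s - a) 0) (run_inf phi s t') d ltac:(lra) ltac:(lra)).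
  lra.
Qed.

Lemma Xi_oscillation : Rabs (Xi a phi t' - Xi a phi t) <= d.
Proof.
  pose proof Xi_increase_bound. pose proof Xi_decrease_bound.
  unfold Rabs; destruct Rcase_abs; lra.
Qed.

Lemma Lambda_increment :
  Rabs (Lambda a phi t' - Lambda a phi t) <= Rabs (phi t' - phi t) + d.
Proof.
  rewrite !Lambda_eq. pose proof Xi_oscillation.
  pose proof (Rabs_triang (phi t' - phi t) (- (Xi a phi t' - Xi a phi t))).
  rewrite Rabs_Ropp in *.
  replace (phi t' - Xi a phi t' - (phi t - Xi a phi t))
    with (phi t' - phi t + - (Xi a phi t' - Xi a phi t)) by ring.
  lra.
Qed.

End Oscillation.

Lemma bounded_on_glue phi x y M N :
  bounded_on phi x M -> (forall u, x <= u <= y -> Rabs (phi u) <= N) ->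
  bounded_on phi y (Rmax M N).
Proof.
  intros HM HN u Hu. destruct (Rle_dec u x).
  - eapply Rle_trans; [apply HM; lra|apply Rmax_l].
  - eapply Rle_trans; [apply HN; lra|apply Rmax_r].
Qed.

Lemma cadlag_right_local_bound phi t :
  cadlag phi -> 0 <= t -> exists d, d > 0 /\ forall u, t <= u < t + d -> Rabs (phi u) <= Rabs (phi t) + 1.
Proof.
  intros [Hr _] Ht. destruct (Hr t Ht 1 ltac:(lra)) as [d [Hd Hclose]].
  exists d; split; [exact Hd|]. intros u Hu.
  pose proof (Hclose u Hu). pose proof (Rabs_triang_inv (phi u) (phi t)). lra.
Qed.

Lemma cadlag_left_local_bound phi t :
  cadlag phi -> 0 < t -> exists d N, d > 0 /\ forall u, t - d < u <= t -> Rabs (phi u) <= N.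
Proof.
  intros [_ Hl] Ht. destruct (Hl t Ht) as [l Hlim].
  destruct (Hlim 1 ltac:(lra)) as [d [Hd Hclose]].
  exists d, (Rmax (Rabs l + 1) (Rabs (phi t))). split; [exact Hd|]. intros u Hu.
  destruct (Req_dec u t) as [->|Hne]; [apply Rmax_r|].
  eapply Rle_trans; [|apply Rmax_l].
  pose proof (Hclose u ltac:(lra)). pose proof (Rabs_triang_inv (phi u) l). lra.
Qed.

(* Cadlag functions are bounded on compact intervals: the supremum c of the
   x such that phi is bounded on [0,x] is attained (left limit at c) and
   equals T (right-continuity at c). *)
Lemma cadlag_bounded phi T : cadlag phi -> 0 <= T -> exists M, bounded_on phi T M.
Proof.
  intros Hc HT.
  set (E := fun x => 0 <= x <= T /\ exists M, bounded_on phi x M).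
  assert (E0 : E 0).
  { split; [lra|]. exists (Rabs (phi 0)). intros u Hu. replace u with 0 by lra. lra. }
  assert (Hlub : is_lub E (sup_set E)).
  { apply sup_set_lub; [now exists 0|]. exists T. intros x Hx; apply Hx. }
  set (c := sup_set E) in *. pose proof Hlub as [Hub Hleast].
  assert (c_ge0 : 0 <= c) by exact (Hub 0 E0).
  assert (c_leT : c <= T) by (apply Hleast; intros x Hx; apply Hx).
  assert (Hbounded_c : exists M, bounded_on phi c M).
  { destruct (Req_dec c 0) as [Hc0|Hc0]; [rewrite Hc0; exact (proj2 E0)|].
    destruct (cadlag_left_local_bound phi c Hc ltac:(lra)) as [d [N [Hd HN]]].
    destruct (lub_approx E c d Hlub Hd) as [x [[Hx [Mx HMx]] Hxc]].
    assert (x <= c) by (apply Hub; split; [exact Hx|now exists Mx]).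
    exists (Rmax Mx N). apply (bounded_on_glue phi x); auto.
    intros u Hu. apply HN; lra. }
  destruct (Req_dec c T) as [HcT|HcT]; [rewrite <- HcT; exact Hbounded_c|exfalso].
  destruct Hbounded_c as [Mc HMc].
  destruct (cadlag_right_local_bound phi c Hc c_ge0) as [d [Hd HN]].
  set (c' := Rmin (c + d / 2) T).
  assert (c < c' <= T /\ c' <= c + d / 2)
    by (unfold c', Rmin; destruct Rle_dec; lra).
  assert (Ec' : E c').
  { split; [lra|]. exists (Rmax Mc (Rabs (phi c) + 1)).
    apply (bounded_on_glue phi c); auto. intros u Hu. apply HN; lra. }
  pose proof (Hub c' Ec'). lra.
Qed.

Lemma inv_succ_in_window t d N n :
  / INR N < d -> (0 < N)%nat -> (n >= N)%nat -> t - d < t - / (INR n + 1) < t.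
Proof.
  intros HN N_pos Hn.
  assert (0 < INR N) by (apply lt_0_INR; lia).
  assert (INR N <= INR n + 1) by (apply le_INR in Hn; lra).
  assert (/ (INR n + 1) <= / INR N) by (apply Rinv_le_contravar; lra).
  assert (0 < / (INR n + 1)) by (apply Rinv_0_lt_compat; pose proof (pos_INR n); lra).
  lra.
Qed.

Lemma left_limit_of_cauchy (f : R -> R) t :
  (forall eps, eps > 0 -> exists d, d > 0 /\
     forall x y, t - d < x < t -> t - d < y < t -> Rabs (f x - f y) < eps) ->
  exists l, forall eps, eps > 0 -> exists d, d > 0 /\
     forall s, t - d < s < t -> Rabs (f s - l) < eps.
Proof.
  intros Hcauchy.
  set (U := fun n : nat => f (t - / (INR n + 1))).
  assert (HU : Cauchy_crit U).
  { intros eps Heps. destruct (Hcauchy eps Heps) as [d [Hd Hclose]].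
    destruct (archimed_cor1 d Hd) as [N [HN N_pos]]. exists N. intros n m Hn Hm.
    unfold Rdist, U. apply Hclose; eapply inv_succ_in_window; eauto. }
  destruct (R_complete U HU) as [l Hl]. exists l.
  intros eps Heps. destruct (Hcauchy (eps / 2) ltac:(lra)) as [d [Hd Hclose]].
  destruct (Hl (eps / 2) ltac:(lra)) as [N1 HN1].
  destruct (archimed_cor1 d Hd) as [N2 [HN2 N2_pos]].
  exists d; split; [exact Hd|]. intros s Hs.
  set (n := Nat.max N1 N2).
  pose proof (HN1 n ltac:(lia)) as Hn. unfold Rdist, U in Hn.
  pose proof (Hclose s _ Hs (inv_succ_in_window t d N2 n HN2 N2_pos ltac:(lia))).
  split_Rabs; lra.
Qed.

Lemma Lambda_cadlag a phi : cadlag phi -> cadlag (Lambda a phi).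
Proof.
  intros Hc. pose proof Hc as [Hr Hl]. split.
  - intros t Ht eps Heps. destruct (Hr t Ht (eps / 2) ltac:(lra)) as [d [Hd Hclose]].
    destruct (cadlag_bounded phi (t + d) Hc ltac:(lra)) as [M HM].
    exists d; split; [exact Hd|]. intros s Hs.
    assert (Rabs (Lambda a phi s - Lambda a phi t) <= Rabs (phi s - phi t) + eps / 2).
    { apply (Lambda_increment a phi (t + d) M); auto; try lra.
      intros u Hu. left. apply Hclose; lra. }
    pose proof (Hclose s Hs). lra.
  - intros t Ht. apply left_limit_of_cauchy.
    destruct (Hl t Ht) as [l Hlim]. intros eps Heps.
    destruct (Hlim (eps / 4) ltac:(lra)) as [d [Hd Hclose]].
    destruct (cadlag_bounded phi t Hc ltac:(lra)) as [M HM].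
    exists (Rmin d t). split; [unfold Rmin; destruct Rle_dec; lra|].
    assert (Rmin d t <= d /\ Rmin d t <= t) by (split; [apply Rmin_l|apply Rmin_r]).
    assert (Hwindow : forall x y, t - Rmin d t < x < t -> t - Rmin d t < y < t ->
              Rabs (phi y - phi x) < eps / 2).
    { intros x y Hx Hy. pose proof (Hclose x ltac:(lra)). pose proof (Hclose y ltac:(lra)).
      split_Rabs; lra. }
    assert (Hordered : forall x y, t - Rmin d t < x < t -> t - Rmin d t < y < t -> x <= y ->
              Rabs (Lambda a phi y - Lambda a phi x) < eps).
    { intros x y Hx Hy Hxy.
      assert (Rabs (Lambda a phi y - Lambda a phi x) <= Rabs (phi y - phi x) + eps / 2).
      { apply (Lambda_increment a phi t M); auto; try lra.
        intros u Hu. left. apply Hwindow; lra. }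
      pose proof (Hwindow x y Hx Hy). lra. }
    intros x y Hx Hy. destruct (Rle_dec x y).
    + rewrite Rabs_minus_sym. auto.
    + apply Hordered; auto; lra.
Qed.

Lemma cont0_cadlag phi : cont0 phi -> cadlag phi.
Proof.
  intros H. split.
  - intros t Ht eps Heps. destruct (H t Ht eps Heps) as [d [Hd Hclose]].
    exists d; split; [exact Hd|]. intros s Hs. apply Hclose; split_Rabs; lra.
  - intros t Ht. exists (phi t). intros eps Heps.
    destruct (H t ltac:(lra) eps Heps) as [d [Hd Hclose]].
    exists (Rmin d t). split; [unfold Rmin; destruct Rle_dec; lra|].
    assert (Rmin d t <= d /\ Rmin d t <= t) by (split; [apply Rmin_l|apply Rmin_r]).
    intros s Hs. apply Hclose; split_Rabs; lra.
Qed.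

Lemma Lambda_cont0 a phi : cont0 phi -> cont0 (Lambda a phi).
Proof.
  intros H t Ht eps Heps. destruct (H t Ht (eps / 4) ltac:(lra)) as [d [Hd Hclose]].
  destruct (cadlag_bounded phi (t + d) (cont0_cadlag phi H) ltac:(lra)) as [M HM].
  exists d; split; [exact Hd|]. intros s Hs Hst.
  pose proof (Hclose s Hs Hst) as Hphi.
  assert (s < t + d) by (split_Rabs; lra).
  destruct (Rle_dec t s).
  - assert (Rabs (Lambda a phi s - Lambda a phi t) <= Rabs (phi s - phi t) + eps / 4).
    { apply (Lambda_increment a phi (t + d) M); auto; try lra.
      intros u Hu. left. apply Hclose; split_Rabs; lra. }
    lra.
  - assert (Hinc : Rabs (Lambda a phi t - Lambda a phi s) <= Rabs (phi t - phi s) + eps / 2).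
    { apply (Lambda_increment a phi (t + d) M); auto; try lra.
      intros u Hu. pose proof (Hclose u ltac:(lra) ltac:(split_Rabs; lra)).
      split_Rabs; lra. }
    rewrite Rabs_minus_sym, (Rabs_minus_sym (phi t)) in Hinc. lra.
Qed.

Lemma fsum_le g h n : (forall i, (i < n)%nat -> g i <= h i) -> fsum g n <= fsum h n.
Proof.
  induction n as [|n IH]; intros Hle; simpl; [lra|].
  pose proof (Hle n ltac:(lia)).
  assert (fsum g n <= fsum h n) by (apply IH; intros; apply Hle; lia). lra.
Qed.

Lemma fsum_plus g h n : fsum (fun i => g i + h i) n = fsum g n + fsum h n.
Proof. induction n as [|n IH]; simpl; [lra|]. rewrite IH; lra. Qed.

Lemma fsum_const c n : fsum (fun _ => c) n = INR n * c.
Proof. induction n as [|n IH]; simpl fsum; [simpl; lra|]. rewrite IH, S_INR; lra. Qed.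

Lemma var_sum_fsum f x n : var_sum f x n = fsum (fun i => Rabs (f (x (S i)) - f (x i))) n.
Proof. induction n as [|n IH]; simpl; [reflexivity|]. now rewrite IH. Qed.

(* An increment of Xi over [l,h] is approximated, up to any eta > 0, by an
   increment of phi over some [l,u] with u in [l,h]; otherwise the oscillation
   bound would give |Xi(h) - Xi(l)| <= |Xi(h) - Xi(l)| - eta. *)
Lemma Xi_increment_witness a phi T M l h eta :
  bounded_on phi T M -> 0 < eta -> 0 <= l -> l <= h -> h <= T ->
  exists u, l <= u <= h /\
    Rabs (Xi a phi h - Xi a phi l) <= Rabs (phi u - phi l) + eta.
Proof.
  intros HB Heta Hl Hlh HhT. apply NNPP. intro Hnone.
  enough (Rabs (Xi a phi h - Xi a phi l) <= Rabs (Xi a phi h - Xi a phi l) - eta) by lra.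
  apply (Xi_oscillation a phi T M); auto.
  intros u Hu. apply Rnot_gt_le. intro Hgt. apply Hnone. exists u; split; [exact Hu|lra].
Qed.

Lemma Lambda_increments_sum a phi T M (lo hi : nat -> R) n eps :
  bounded_on phi T M -> 0 < eps ->
  (forall i, (i < n)%nat -> 0 <= lo i /\ lo i <= hi i /\ hi i <= T) ->
  exists u : nat -> R, (forall i, (i < n)%nat -> lo i <= u i <= hi i) /\
    fsum (fun i => Rabs (Lambda a phi (hi i) - Lambda a phi (lo i))) n <=
    fsum (fun i => Rabs (phi (hi i) - phi (lo i))) n
    + fsum (fun i => Rabs (phi (u i) - phi (lo i))) n + eps.
Proof.
  intros HB Heps Hint.
  set (eta := eps / (INR n + 1)).
  assert (Heta : 0 < eta /\ INR n * eta <= eps).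
  { pose proof (pos_INR n). unfold eta. split.
    - apply Rdiv_lt_0_compat; lra.
    - replace (INR n * (eps / (INR n + 1))) with (eps - eps / (INR n + 1)) by (field; lra).
      enough (0 < eps / (INR n + 1)) by lra. apply Rdiv_lt_0_compat; lra. }
  assert (Hpick : forall i, exists v, (i < n)%nat -> lo i <= v <= hi i /\
     Rabs (Lambda a phi (hi i) - Lambda a phi (lo i))
       <= Rabs (phi (hi i) - phi (lo i)) + Rabs (phi v - phi (lo i)) + eta).
  { intros i. destruct (Compare_dec.lt_dec i n) as [Hi|Hi]; [|exists 0; intros; lia].
    destruct (Hint i Hi) as [Hl [Hlh HhT]].
    destruct (Xi_increment_witness a phi T M (lo i) (hi i) eta HB (proj1 Heta) Hl Hlh HhT)
      as [v [Hv Hxi]].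
    exists v; intros _; split; [exact Hv|].
    rewrite !Lambda_eq. split_Rabs; lra. }
  destruct (choice _ Hpick) as [u Hu]. exists u. split.
  - intros i Hi; apply (Hu i Hi).
  - assert (Hle : fsum (fun i => Rabs (Lambda a phi (hi i) - Lambda a phi (lo i))) n <=
            fsum (fun i => (Rabs (phi (hi i) - phi (lo i)) + Rabs (phi (u i) - phi (lo i)))
                           + eta) n).
    { apply fsum_le. intros i Hi; apply (Hu i Hi). }
    rewrite !fsum_plus, fsum_const in Hle. lra.
Qed.

(* The refinement x 0, u 0, x 1, u 1, ... of a partition x by points u. *)
Definition interleave (x u : nat -> R) (k : nat) : R :=
  if Nat.even k then x (Nat.div2 k) else u (Nat.div2 k).

Lemma interleave_even x u i : interleave x u (2 * i) = x i.
Proof. unfold interleave. now rewrite Nat.even_mul, Nat.div2_double. Qed.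

Lemma interleave_odd x u i : interleave x u (S (2 * i)) = u i.
Proof.
  unfold interleave. now rewrite Nat.even_succ, Nat.odd_mul, Nat.div2_succ_double.
Qed.

Lemma var_sum_interleave f x u n : var_sum f (interleave x u) (2 * n) =
  fsum (fun i => Rabs (f (u i) - f (x i)) + Rabs (f (x (S i)) - f (u i))) n.
Proof.
  induction n as [|n IH]; [reflexivity|].
  replace (2 * S n)%nat with (S (S (2 * n))) by lia.
  cbn [var_sum fsum]. rewrite IH.
  replace (S (S (2 * n))) with (2 * S n)%nat by lia.
  rewrite !interleave_even, interleave_odd. ring.
Qed.

Lemma interleave_nondecreasing x u n :
  (forall i, (i < n)%nat -> x i <= u i <= x (S i)) ->
  forall k, (k < 2 * n)%nat -> interleave x u k <= interleave x u (S k).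
Proof.
  intros H k Hk. destruct (Nat.Even_or_Odd k) as [[i ->]|[i ->]].
  - rewrite interleave_odd, interleave_even. apply H; lia.
  - replace (2 * i + 1)%nat with (S (2 * i)) by lia.
    replace (S (S (2 * i))) with (2 * S i)%nat by lia.
    rewrite interleave_odd, interleave_even. apply H; lia.
Qed.

Lemma nondecreasing_le x n : (forall i, (i < n)%nat -> x i <= x (S i)) ->
  forall i j, (i <= j <= n)%nat -> x i <= x j.
Proof.
  intros H i j. induction j as [|j IH]; intros Hij.
  - replace i with O by lia; lra.
  - destruct (Nat.eq_dec i (S j)) as [->|Hne]; [lra|].
    pose proof (IH ltac:(lia)). pose proof (H j ltac:(lia)). lra.
Qed.

(* Lambda_a preserves paths of locally bounded variation: refining a
   partition x by the witness points u at most doubles the variation of phi. *)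
Lemma Lambda_BV0 a phi : BV0 phi -> BV0 (Lambda a phi).
Proof.
  intros [Hc Hbv]. split; [now apply Lambda_cadlag|].
  intros T HT. destruct (Hbv T HT) as [V HV]. destruct (cadlag_bounded phi T Hc HT) as [M HM].
  exists (2 * V + 1). intros x n Hx0 Hmono HxT.
  assert (Hint : forall i, (i < n)%nat -> 0 <= x i /\ x i <= x (S i) /\ x (S i) <= T).
  { intros i Hi. pose proof (nondecreasing_le x n Hmono O i ltac:(lia)).
    pose proof (nondecreasing_le x n Hmono (S i) n ltac:(lia)).
    pose proof (Hmono i Hi). lra. }
  destruct (Lambda_increments_sum a phi T M x (fun i => x (S i)) n 1 HM ltac:(lra) Hint)
    as [u [Hu Hsum]].
  assert (Hrefined : var_sum phi (interleave x u) (2 * n) <= V).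
  { apply HV.
    - replace O with (2 * 0)%nat by lia. now rewrite interleave_even.
    - apply interleave_nondecreasing. intros i Hi. apply Hu, Hi.
    - now rewrite interleave_even. }
  rewrite var_sum_interleave in Hrefined.
  assert (fsum (fun i => Rabs (phi (u i) - phi (x i))) n <= V).
  { eapply Rle_trans; [|exact Hrefined]. apply fsum_le. intros i _.
    pose proof (Rabs_pos (phi (x (S i)) - phi (u i))). lra. }
  pose proof (HV x n Hx0 Hmono HxT).
  rewrite !var_sum_fsum in *. lra.
Qed.

Lemma ac_loc_cont0 phi : ac_loc phi -> cont0 phi.
Proof.
  intros Hac t Ht eps Heps. destruct (Hac (t + 1) ltac:(lra) eps Heps) as [d [Hd Hsmall]].
  exists (Rmin d 1). split; [unfold Rmin; destruct Rle_dec; lra|].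
  assert (Rmin d 1 <= d /\ Rmin d 1 <= 1) by (split; [apply Rmin_l|apply Rmin_r]).
  assert (Hone : forall l h, 0 <= l <= h -> h <= t + 1 -> h - l < d ->
             Rabs (phi h - phi l) < eps).
  { intros l h Hlh HhT Hlen.
    pose proof (Hsmall (fun _ => l) (fun _ => h) 1%nat) as K. simpl in K.
    enough (0 + Rabs (phi h - phi l) < eps) by lra.
    apply K; [intros; lra|intros; lia|lra]. }
  intros s Hs Hst. destruct (Rle_dec t s).
  - apply Hone; split_Rabs; lra.
  - rewrite Rabs_minus_sym. apply Hone; split_Rabs; lra.
Qed.

(* Lambda_a preserves locally absolutely continuous paths: the intervals
   [lo i, u i] are again admissible for the absolute continuity of phi. *)
Lemma Lambda_ac_loc a phi : ac_loc phi -> ac_loc (Lambda a phi).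
Proof.
  intros Hac. pose proof (cont0_cadlag phi (ac_loc_cont0 phi Hac)) as Hc.
  intros T HT eps Heps. destruct (Hac T HT (eps / 4) ltac:(lra)) as [d [Hd Hsmall]].
  destruct (cadlag_bounded phi T Hc HT) as [M HM].
  exists d; split; [exact Hd|]. intros lo hi n Hint Hdisj Hlen.
  destruct (Lambda_increments_sum a phi T M lo hi n (eps / 4) HM ltac:(lra) Hint)
    as [u [Hu Hsum]].
  pose proof (Hsmall lo hi n Hint Hdisj Hlen).
  assert (fsum (fun i => Rabs (phi (u i) - phi (lo i))) n < eps / 4).
  { apply Hsmall.
    - intros i Hi. pose proof (Hint i Hi). pose proof (Hu i Hi). lra.
    - intros i Hi. pose proof (Hu i ltac:(lia)). pose proof (Hdisj i Hi). lra.
    - eapply Rle_lt_trans; [|exact Hlen]. apply fsum_le. intros i Hi.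
      pose proof (Hu i Hi). lra. }
  lra.
Qed.

Theorem proposition1p3 (a : R) (ha : 0 < a) :
  (forall phi, cadlag phi -> cadlag (Lambda a phi)) /\
  (forall phi, cont0 phi -> cont0 (Lambda a phi)) /\
  (forall phi, BV0 phi -> BV0 (Lambda a phi)) /\
  (forall phi, ac_loc phi -> ac_loc (Lambda a phi)).
Proof.
  split; [|split; [|split]].
  - apply Lambda_cadlag.
  - apply Lambda_cont0.
  - apply Lambda_BV0.
  - apply Lambda_ac_loc.
Qed.
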